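(* Let $a$ and $b$ be disjoint finite groups of labeled samples with $n_1^a,n_0^a,n_1^b,n_0^b\ge 1$, and let the within-group orderings $\mathrm{p}^a$ and $\mathrm{p}^b$ be fixed. Then: (i) there exists a cross-group ordering $o$ with $$\Delta\mathrm{xAUC}(o)\le \min\Big(\max\big(\tfrac{1}{n_1^b},\tfrac{1}{n_0^b}\big),\ \max\big(\tfrac{1}{n_1^a},\tfrac{1}{n_0^a}\big)\Big);$$ (ii) there exists a cross-group ordering $o'$ with $$\Delta\mathrm{PRF}(o')\le \min\Big(\max\big(\tfrac{n_0^b}{n_1^a n_0},\tfrac{1}{n_0}\big),\ \max\big(\tfrac{n_0^a}{n_1^b n_0},\tfrac{1}{n_0}\big)\Big).$$
   Context: Setting: two disjoint finite groups $a$, $b$ of samples; each sample $u$ has a label $Y_u\in\{0,1\}$. Let $n^a,n^b$ be the group sizes, $n_1^a,n_0^a$ the numbers of label-1 and label-0 samples in $a$ (similarly $n_1^b,n_0^b$), $n_1=n_1^a+n_1^b$, $n_0=n_0^a+n_0^b$. Fixed within-group rankings are given: $\mathrm{p}^a=(\mathrm{p}^{a(1)},\dots,\mathrm{p}^{a(n^a)})$ lists all samples of $a$, and $\mathrm{p}^b=(\mathrm{p}^{b(1)},\dots,\mathrm{p}^{b(n^b)})$ lists all samples of $b$. A cross-group ordering $o$ is a ranked list (strict total order, top to bottom) of all samples of $a\cup b$ whose restriction to $a$ is $\mathrm{p}^a$ and whose restriction to $b$ is $\mathrm{p}^b$. Write $u\succ_o v$ if $u$ is ranked above $v$ in $o$.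 Define $\mathrm{xAUC}_o(a,b)=\frac{1}{n_1^a n_0^b}\#\{(u,v):u\in a,Y_u=1,v\in b,Y_v=0,u\succ_o v\}$, and $\mathrm{xAUC}_o(b,a)$ symmetrically (positives of $b$ over negatives of $a$, normalized by $n_1^b n_0^a$); $\Delta\mathrm{xAUC}(o)=|\mathrm{xAUC}_o(a,b)-\mathrm{xAUC}_o(b,a)|$. $\mathrm{PRF}_o(a)=\frac{1}{n_1^a n_0}\#\{(u,v):u\in a,Y_u=1,Y_v=0\ (v\in a\cup b),u\succ_o v\}$, $\mathrm{PRF}_o(b)$ symmetrically (normalized by $n_1^b n_0$), and $\Delta\mathrm{PRF}(o)=|\mathrm{PRF}_o(a)-\mathrm{PRF}_o(b)|$. *)

From mathcomp Require Import all_boot all_order all_algebra.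
Set Implicit Arguments. Unset Strict Implicit. Unset Printing Implicit Defensive.
Import Order.TTheory GRing.Theory Num.Theory.
Local Open Scope ring_scope.

(* Samples are elements of a finite type T; groups are disjoint sets A, B;
   labels are given by Y : T -> bool (true = label 1).
   Rankings are sequences listed top to bottom. *)
Section Defs.
Variable T : finType.

Definition npos (Y : T -> bool) (S : {set T}) : nat := #|[set u in S | Y u]|.
Definition nneg (Y : T -> bool) (S : {set T}) : nat := #|[set u in S | ~~ Y u]|.

Definition ranking_of (S : {set T}) (p : seq T) : Prop :=
  uniq p /\ (forall x, (x \in p) = (x \in S)).

Definition cross_ordering (A B : {set T}) (pa pb o : seq T) : Prop :=
  [/\ uniq o, (forall x, (x \in o) = (x \in A :|: B)),
      [seq x <- o | x \in A] = pa & [seq x <- o | x \in B] = pb].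

Definition above (o : seq T) (u v : T) : bool := (index u o < index v o)%N.

Definition xAUC (Y : T -> bool) (o : seq T) (A B : {set T}) : rat :=
  (#|[set p : T * T | [&& p.1 \in A, Y p.1, p.2 \in B, ~~ Y p.2 & above o p.1 p.2]]|)%:R
  / ((npos Y A * nneg Y B)%N)%:R.

Definition DxAUC (Y : T -> bool) (o : seq T) (A B : {set T}) : rat :=
  `|xAUC Y o A B - xAUC Y o B A|.

(* PRF_o(A) with respect to the pair of groups (A,B): positives of A ranked
   above negatives of A u B, normalized by n_1^A * n_0, n_0 = n_0^A + n_0^B *)
Definition PRF (Y : T -> bool) (o : seq T) (A B : {set T}) : rat :=
  (#|[set p : T * T | [&& p.1 \in A, Y p.1, p.2 \in A :|: B, ~~ Y p.2 & above o p.1 p.2]]|)%:R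
  / ((npos Y A * (nneg Y A + nneg Y B))%N)%:R.

Definition DPRF (Y : T -> bool) (o : seq T) (A B : {set T}) : rat :=
  `|PRF Y o A B - PRF Y o B A|.
End Defs.

From mathcomp Require Import all_boot all_order all_algebra.
From mathcomp Require Import lra zify.
Set Implicit Arguments. Unset Strict Implicit. Unset Printing Implicit Defensive.
Import Order.TTheory GRing.Theory Num.Theory.
Local Open Scope ring_scope.

(* The proof is a discrete intermediate value argument.  Let g(o) be the
   signed gap (xAUC_o(a,b) - xAUC_o(b,a), resp. PRF_o(a) - PRF_o(b)).  With
   all of a ranked above all of b we have g >= 0, with all of b above all of
   a we have g <= 0.  Sliding the block p^a down through p^b one position at
   a time, g changes sign between two consecutive block positions; between
   them, the element y of p^b being passed moves up through p^a one element
   at a time (the orderings [sweep]).  Each such move exchanges one adjacent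
   pair x in a, y in b, which affects only whether the pair (x,y) or (y,x)
   is counted, so g drops by at most one normalized pair weight, and that
   weight is below the claimed bound.  Where g changes sign along this
   refined walk, the ordering with g >= 0 satisfies |g| <= bound. *)

Lemma sign_change (g : nat -> rat) (n : nat) :
  (0 < n)%N -> 0 <= g 0%N -> g n <= 0 ->
  exists2 i, (i < n)%N & 0 <= g i /\ g i.+1 <= 0.
Proof.
elim: n => [//|n IH] _ g0 gn.
have [gn_ge0 | gn_lt0] := leP 0 (g n); first by exists n.
case: n IH gn gn_lt0 => [|n] IH gn gn_lt0.
  by move: (lt_le_trans gn_lt0 g0); rewrite ltxx.
have [i lt_in gi] := IH isT g0 (ltW gn_lt0).
by exists i => //; apply: ltnW.
Qed.

Section Rankings.
Variable T : finType.
Implicit Types (L R : seq T) (x y u v : T).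

Lemma above_swap L R x y u v :
  ~~ ((u == x) && (v == y)) -> ~~ ((u == y) && (v == x)) ->
  above (L ++ x :: y :: R) u v = above (L ++ y :: x :: R) u v.
Proof.
rewrite /above !index_cat /= (eq_sym x u) (eq_sym y u) (eq_sym x v) (eq_sym y v).
move: (index_mem u L) (index_mem v L).
case: (u \in L); case: (v \in L) => /= Hu Hv;
case: (u == x); case: (u == y); case: (v == x); case: (v == y) => //= *; lia.
Qed.

Lemma above_catl (s1 s2 : seq T) u v :
  u \in s1 -> v \notin s1 -> above (s1 ++ s2) u v.
Proof.
move=> u_s1 v_s1; rewrite /above !index_cat u_s1 (negbTE v_s1).
by have := index_mem u s1; rewrite u_s1; lia.
Qed.

Lemma above_catr (s1 s2 : seq T) u v :
  v \in s1 -> u \notin s1 -> ~~ above (s1 ++ s2) u v.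
Proof.
move=> v_s1 u_s1; rewrite /above !index_cat v_s1 (negbTE u_s1).
by have := index_mem v s1; rewrite v_s1; lia.
Qed.

Lemma interleave_cross (A B : {set T}) (P1 P2 P3 Q1 Q2 : seq T) :
  [disjoint A & B] -> ranking_of A (Q1 ++ Q2) -> ranking_of B (P1 ++ P2 ++ P3) ->
  cross_ordering A B (Q1 ++ Q2) (P1 ++ P2 ++ P3) (P1 ++ Q1 ++ P2 ++ Q2 ++ P3).
Proof.
move=> dAB [uQ memQ] [uP memP].
have perm : perm_eq (P1 ++ Q1 ++ P2 ++ Q2 ++ P3) ((Q1 ++ Q2) ++ (P1 ++ P2 ++ P3)).
  by apply/permP => p; rewrite !count_cat; lia.
have keepA s : {subset s <= Q1 ++ Q2} -> [seq x <- s | x \in A] = s.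
  by move=> sQ; apply/all_filterP/allP => x /sQ; rewrite memQ.
have keepB s : {subset s <= P1 ++ P2 ++ P3} -> [seq x <- s | x \in B] = s.
  by move=> sP; apply/all_filterP/allP => x /sP; rewrite memP.
have dropA s : {subset s <= P1 ++ P2 ++ P3} -> [seq x <- s | x \in A] = [::].
  move=> sP; rewrite -[RHS](filter_pred0 s); apply: eq_in_filter => x /sP.
  by rewrite memP => /(disjointFl dAB) ->.
have dropB s : {subset s <= Q1 ++ Q2} -> [seq x <- s | x \in B] = [::].
  move=> sQ; rewrite -[RHS](filter_pred0 s); apply: eq_in_filter => x /sQ.
  by rewrite memQ => /(disjointFr dAB) ->.
split.
- rewrite (perm_uniq perm) cat_uniq uQ uP andbT; apply/hasPn => x.
  by rewrite memP memQ => /(disjointFl dAB) ->.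
- by move=> x; rewrite (perm_mem perm) mem_cat memQ memP inE.
- rewrite !filter_cat (dropA P1) ?(keepA Q1) ?(dropA P2) ?(keepA Q2) ?(dropA P3) ?cats0 //;
    by move=> x xs; rewrite !mem_cat xs ?orbT.
- rewrite !filter_cat (keepB P1) ?(dropB Q1) ?(keepB P2) ?(dropB Q2) ?(keepB P3) //;
    by move=> x xs; rewrite !mem_cat xs ?orbT.
Qed.

Definition sweep (pa pb : seq T) (q k : nat) : seq T :=
  take q pb ++ take k pa ++ take 1 (drop q pb) ++ drop k pa ++ drop 1 (drop q pb).

Lemma sweep_cross (A B : {set T}) (pa pb : seq T) q k :
  [disjoint A & B] -> ranking_of A pa -> ranking_of B pb ->
  cross_ordering A B pa pb (sweep pa pb q k).
Proof.
move=> dAB.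
have := @interleave_cross A B (take q pb) (take 1 (drop q pb)) (drop 1 (drop q pb))
  (take k pa) (drop k pa) dAB.
by rewrite !cat_take_drop.
Qed.

Lemma sweep_above_all (pa pb : seq T) q :
  sweep pa pb q (size pa) = take q pb ++ pa ++ drop q pb.
Proof. by rewrite /sweep take_size drop_size /= cat_take_drop. Qed.

Lemma sweep_below_all (pa pb : seq T) q :
  sweep pa pb q 0 = take q.+1 pb ++ pa ++ drop q.+1 pb.
Proof. by rewrite /sweep take0 drop0 /= -[q.+1]addn1 takeD addnC -drop_drop -catA. Qed.

Lemma sweep_swap (pa pb : seq T) q k : (k < size pa)%N -> (q < size pb)%N ->
  exists L R x y, [/\ x \in pa, y \in pb,
    sweep pa pb q k.+1 = L ++ x :: y :: R & sweep pa pb q k = L ++ y :: x :: R].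
Proof.
move=> lt_k lt_q; rewrite /sweep -[k.+1]addn1 takeD addnC -drop_drop.
case Ea: (drop k pa) => [|x ra].
  by move: (size_drop k pa) lt_k; rewrite Ea -subn_gt0 => <-.
case Eb: (drop q pb) => [|y rb].
  by move: (size_drop q pb) lt_q; rewrite Eb -subn_gt0 => <-.
exists (take q pb ++ take k pa), (ra ++ rb), x, y; split.
- by rewrite -(cat_take_drop k pa) Ea mem_cat inE eqxx orbT.
- by rewrite -(cat_take_drop q pb) Eb mem_cat inE eqxx orbT.
- by rewrite /= !take0 !drop0 -!catA.
- by rewrite /= !take0 !drop0 -!catA.
Qed.

End Rankings.

Lemma balanced_cross_ordering (T : finType) (A B : {set T}) (pa pb : seq T)
    (g : seq T -> rat) (s : rat) :
  [disjoint A & B] -> ranking_of A pa -> ranking_of B pb ->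
  (0 < size pa)%N -> (0 < size pb)%N ->
  0 <= g (pa ++ pb) -> g (pb ++ pa) <= 0 ->
  (forall L R x y, x \in A -> y \in B ->
     g (L ++ x :: y :: R) - g (L ++ y :: x :: R) <= s) ->
  exists o, cross_ordering A B pa pb o /\ `|g o| <= s.
Proof.
move=> dAB ra rb pa_gt0 pb_gt0 g_start g_end g_step.
have g_top : 0 <= g (sweep pa pb 0 (size pa)).
  by rewrite sweep_above_all take0 drop0.
have g_bot : g (sweep pa pb (size pb) (size pa)) <= 0.
  by rewrite sweep_above_all take_size drop_size cats0.
have [q lt_q [gq gq1]] :=
  sign_change (g := fun q => g (sweep pa pb q (size pa))) pb_gt0 g_top g_bot.
have gq' : 0 <= g (sweep pa pb q (size pa - 0)) by rewrite subn0.
have gq1' : g (sweep pa pb q (size pa - size pa)) <= 0.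
  by rewrite subnn sweep_below_all -sweep_above_all.
have [m lt_m [gm gm1]] :=
  sign_change (g := fun m => g (sweep pa pb q (size pa - m))) pa_gt0 gq' gq1'.
have lt_k : (size pa - m.+1 < size pa)%N by lia.
have Ek : (size pa - m = (size pa - m.+1).+1)%N by lia.
have [L [R [x [y [x_pa y_pb Ehi Elo]]]]] := sweep_swap lt_k lt_q.
exists (sweep pa pb q (size pa - m.+1).+1); split; first exact: sweep_cross.
have [[_ memA] [_ memB]] := (ra, rb).
have := g_step L R x y; rewrite -memA -memB x_pa y_pb -Ehi -Elo => /(_ isT isT).
move: gm gm1; rewrite /= Ek => gm gm1 step.
by rewrite ger0_norm //; lra.
Qed.

Lemma card_differ_le (U : finType) (F G : pred U) (a b : U) :
  (forall p, p != a -> p != b -> F p = G p) ->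
  (#|[set p | F p]| <= #|[set p | G p]| + (F a + F b))%N.
Proof.
move=> FG.
rewrite (cardD1 a [set p | F p]) (cardD1 b [predD1 [set p | F p] & a]) !inE.
have -> : #|[predD1 [predD1 [set p | F p] & a] & b]| =
          #|[pred p | G p & (p != a) && (p != b)]|.
  apply: eq_card => p; rewrite !inE.
  by case Ea: (p != a); case Eb: (p != b); rewrite /= ?andbF ?andbT // FG.
have : (#|[pred p | G p & (p != a) && (p != b)]| <= #|[set p | G p]|)%N.
  by apply: subset_leq_card; apply/subsetP => p; rewrite !inE => /andP[].
have : ((b != a) && F b <= F b)%N by case: (b != a); case: (F b).
lia.
Qed.

Section PairCounts.
Variables (T : finType) (Y : T -> bool).
Implicit Types (o L R : seq T) (S Q N : {set T}) (x y u v : T).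

Definition pair_count o S Q : nat :=
  #|[set p : T * T | [&& p.1 \in S, Y p.1, p.2 \in Q, ~~ Y p.2 & above o p.1 p.2]]|.

Lemma xAUCE o S Q :
  xAUC Y o S Q = (pair_count o S Q)%:R / (npos Y S * nneg Y Q)%:R.
Proof. by []. Qed.

Lemma PRFE o S Q :
  PRF Y o S Q =
  (pair_count o S (S :|: Q))%:R / (npos Y S * (nneg Y S + nneg Y Q))%:R.
Proof. by []. Qed.

Lemma pair_count_swap L R x y S Q :
  (pair_count (L ++ x :: y :: R) S Q <= pair_count (L ++ y :: x :: R) S Q
     + [&& x \in S, Y x, y \in Q & ~~ Y y] + [&& y \in S, Y y, x \in Q & ~~ Y x])%N.
Proof.
pose F o (p : T * T) := [&& p.1 \in S, Y p.1, p.2 \in Q, ~~ Y p.2 & above o p.1 p.2].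
rewrite -addnA; apply: leq_trans
  (@card_differ_le _ (F (L ++ x :: y :: R)) (F (L ++ y :: x :: R)) (x, y) (y, x) _) _.
  by move=> [u v]; rewrite !xpair_eqE => nxy nyx; rewrite /F /= above_swap.
by rewrite leq_add2l /F /=; apply: leq_add; case: (above _ _ _); rewrite ?andbT ?andbF.
Qed.

Lemma pair_count_eq0 o S Q :
  (forall u v, u \in S -> v \in Q -> ~~ above o u v) -> pair_count o S Q = 0%N.
Proof.
move=> not_above; apply/eqP; rewrite cards_eq0; apply/eqP/setP => -[u v].
rewrite !inE /=; case uS: (u \in S); case vQ: (v \in Q); rewrite ?andbF //=.
by rewrite (negbTE (not_above u v uS vQ)) !andbF.
Qed.

Lemma pair_count_ge o S Q N : N \subset Q ->
  (forall u v, u \in S -> v \in N -> above o u v) ->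
  (npos Y S * nneg Y N <= pair_count o S Q)%N.
Proof.
move=> /subsetP NQ all_above; rewrite /npos /nneg -cardsX.
apply: subset_leq_card; apply/subsetP => -[u v].
rewrite !inE /= => /andP[/andP[uS Yu] /andP[vN Yv]].
by rewrite uS Yu NQ // Yv all_above.
Qed.

Lemma pair_count_le o S Q N :
  (forall u v, u \in S -> v \in Q -> above o u v -> v \in N) ->
  (pair_count o S Q <= npos Y S * nneg Y N)%N.
Proof.
move=> below; rewrite /npos /nneg -cardsX.
apply: subset_leq_card; apply/subsetP => -[u v].
by rewrite !inE /= => /and5P[uS Yu vQ Yv uv]; rewrite uS Yu Yv (below u v).
Qed.

End PairCounts.

Lemma ratio_step (c c' D : nat) (e : bool) : (c <= c' + e)%N ->
  c%:R / D%:R <= c'%:R / D%:R + (if e then 1 / D%:R else 0) :> rat.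
Proof.
have -> : (if e then 1 / D%:R else 0) = (e : nat)%:R / D%:R :> rat.
  by case: e; rewrite /= ?mulr1n ?mulr0n ?mul0r.
by move=> le_c; rewrite -mulrDl -natrD ler_wpM2r ?invr_ge0 ?ler0n ?ler_nat.
Qed.

Lemma gap_step (a a' b b' da db s : rat) (ea eb : bool) :
  a <= a' + (if ea then da else 0) -> b' <= b + (if eb then db else 0) ->
  ~~ (ea && eb) -> 0 <= s -> da <= s -> db <= s -> (a - b) - (a' - b') <= s.
Proof. by case: ea; case: eb => //= ha hb _ s0 hda hdb; lra. Qed.

(* The step estimate shared by both metrics: exchanging x in A above y in B
   changes the normalized gap by at most one pair weight, since the pairs
   (x, y) and (y, x) cannot both be (positive, negative). *)
Lemma gap_swap_le (T : finType) (Y : T -> bool) (A B QA QB : {set T})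
    (DA DB : nat) (s : rat) (L R : seq T) (x y : T) :
  x \in A -> x \notin B -> y \in B -> y \notin A ->
  1 / DA%:R <= s -> 1 / DB%:R <= s ->
  ((pair_count Y (L ++ x :: y :: R) A QA)%:R / DA%:R
     - (pair_count Y (L ++ x :: y :: R) B QB)%:R / DB%:R)
  - ((pair_count Y (L ++ y :: x :: R) A QA)%:R / DA%:R
     - (pair_count Y (L ++ y :: x :: R) B QB)%:R / DB%:R) <= s.
Proof.
move=> xA xB yB yA hA hB.
have hiA := pair_count_swap Y L R x y A QA.
have loB := pair_count_swap Y L R y x B QB.
rewrite (negbTE yA) andFb addn0 in hiA; rewrite (negbTE xB) andFb addn0 in loB.
have s_ge0 : 0 <= s by apply: le_trans hA; rewrite divr_ge0.
apply: (gap_step (ratio_step DA hiA) (ratio_step DB loB) _ s_ge0 hA hB).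
by case: (Y x); case: (Y y); rewrite ?andbF.
Qed.

Lemma share_le (c b m n : nat) : (0 < b)%N -> (c <= b * m)%N ->
  c%:R / (b * n)%:R <= m%:R / n%:R :> rat.
Proof.
move=> b_gt0 le_c; have b_neq0 : b%:R != 0 :> rat by rewrite pnatr_eq0 -lt0n.
have -> : m%:R / n%:R = (b * m)%:R / (b * n)%:R :> rat.
  by rewrite !natrM invfM mulrACA mulfV ?mul1r.
by rewrite ler_wpM2r ?invr_ge0 ?ler0n ?ler_nat.
Qed.

Lemma share_ge (c b m n : nat) : (0 < b)%N -> (b * m <= c)%N ->
  m%:R / n%:R <= c%:R / (b * n)%:R :> rat.
Proof.
move=> b_gt0 le_c; have b_neq0 : b%:R != 0 :> rat by rewrite pnatr_eq0 -lt0n.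
have -> : m%:R / n%:R = (b * m)%:R / (b * n)%:R :> rat.
  by rewrite !natrM invfM mulrACA mulfV ?mul1r.
by rewrite ler_wpM2r ?invr_ge0 ?ler0n ?ler_nat.
Qed.

Lemma inv_mul_lel (a b : nat) : (0 < a)%N -> (0 < b)%N ->
  1 / (a * b)%:R <= 1 / a%:R :> rat.
Proof.
move=> a_gt0 b_gt0; rewrite !div1r lef_pV2 ?posrE ?ltr0n ?muln_gt0 ?a_gt0 ?b_gt0 //.
by rewrite ler_nat leq_pmulr.
Qed.

Lemma inv_mul_ler (a b : nat) : (0 < a)%N -> (0 < b)%N ->
  1 / (a * b)%:R <= 1 / b%:R :> rat.
Proof. by move=> a_gt0 b_gt0; rewrite mulnC inv_mul_lel. Qed.

Lemma inv_le_ratio (a n c : nat) : (0 < c)%N ->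
  1 / (a * n)%:R <= c%:R / (a%:R * n%:R) :> rat.
Proof. by move=> c_gt0; rewrite -natrM ler_wpM2r ?invr_ge0 ?ler0n ?ler1n. Qed.

Section Metrics.
Variables (T : finType) (Y : T -> bool) (A B : {set T}).
Hypothesis dAB : [disjoint A & B].

Lemma xAUC_gap_swap s L R x y : x \in A -> y \in B ->
  1 / (npos Y A * nneg Y B)%:R <= s -> 1 / (npos Y B * nneg Y A)%:R <= s ->
  (xAUC Y (L ++ x :: y :: R) A B - xAUC Y (L ++ x :: y :: R) B A)
  - (xAUC Y (L ++ y :: x :: R) A B - xAUC Y (L ++ y :: x :: R) B A) <= s.
Proof.
move=> xA yB; rewrite !xAUCE; apply: gap_swap_le => //.
  by rewrite (disjointFr dAB xA).
by rewrite (disjointFl dAB yB).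
Qed.

Lemma PRF_gap_swap s L R x y : x \in A -> y \in B ->
  1 / (npos Y A * (nneg Y A + nneg Y B))%:R <= s ->
  1 / (npos Y B * (nneg Y B + nneg Y A))%:R <= s ->
  (PRF Y (L ++ x :: y :: R) A B - PRF Y (L ++ x :: y :: R) B A)
  - (PRF Y (L ++ y :: x :: R) A B - PRF Y (L ++ y :: x :: R) B A) <= s.
Proof.
move=> xA yB; rewrite !PRFE; apply: gap_swap_le => //.
  by rewrite (disjointFr dAB xA).
by rewrite (disjointFl dAB yB).
Qed.

(* With all of A ranked above B, no positive of B beats a negative of A. *)
Lemma xAUC_gap_start (pa pb : seq T) : (forall x, (x \in pa) = (x \in A)) ->
  0 <= xAUC Y (pa ++ pb) A B - xAUC Y (pa ++ pb) B A.
Proof.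
move=> memA; rewrite subr_ge0 [xAUC _ _ B A]xAUCE pair_count_eq0 ?mul0r ?divr_ge0 //.
move=> u v uB vA; apply: above_catr; first by rewrite memA.
by rewrite memA (disjointFl dAB uB).
Qed.

(* With all of A ranked above B: PRF(B) <= n_0^b / n_0 <= PRF(A). *)
Lemma PRF_gap_start (pa pb : seq T) : (forall x, (x \in pa) = (x \in A)) ->
  (0 < npos Y A)%N -> (0 < npos Y B)%N ->
  0 <= PRF Y (pa ++ pb) A B - PRF Y (pa ++ pb) B A.
Proof.
move=> memA pA pB; rewrite subr_ge0 !PRFE.
apply: (@le_trans _ _ ((nneg Y B)%:R / (nneg Y A + nneg Y B)%:R)).
  rewrite addnC; apply: share_le pB _; apply: pair_count_le => u v uB.
  rewrite inE => /orP[//|vA] uv.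
  have vpa : v \in pa by rewrite memA.
  have upa : u \notin pa by rewrite memA (disjointFl dAB uB).
  by case/negP: (above_catr pb vpa upa).
apply: share_ge pA _; apply: pair_count_ge; first exact: subsetUr.
move=> u v uA vB; apply: above_catl; first by rewrite memA.
by rewrite memA (disjointFl dAB vB).
Qed.

End Metrics.

Lemma ranking_size_gt0 (T : finType) (Y : T -> bool) (S : {set T}) (p : seq T) :
  ranking_of S p -> (0 < npos Y S)%N -> (0 < size p)%N.
Proof.
move=> [_ memp] /card_gt0P[u]; rewrite inE -memp.
by case: p {memp} => //; rewrite in_nil.
Qed.

Lemma fair_xAUC_ordering (T : finType) (A B : {set T}) (Y : T -> bool)
    (pa pb : seq T) :
  [disjoint A & B] ->
  (0 < npos Y A)%N -> (0 < nneg Y A)%N -> (0 < npos Y B)%N -> (0 < nneg Y B)%N ->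
  ranking_of A pa -> ranking_of B pb ->
  exists o, cross_ordering A B pa pb o /\
     DxAUC Y o A B <=
       Num.min (Num.max (1 / (npos Y B)%:R) (1 / (nneg Y B)%:R))
               (Num.max (1 / (npos Y A)%:R) (1 / (nneg Y A)%:R)).
Proof.
move=> dAB pA nA pB nB ra rb; set s := Num.min _ _.
have sAB : 1 / (npos Y A * nneg Y B)%:R <= s.
  by rewrite le_min !le_max inv_mul_ler ?inv_mul_lel ?orbT.
have sBA : 1 / (npos Y B * nneg Y A)%:R <= s.
  by rewrite le_min !le_max inv_mul_ler ?inv_mul_lel ?orbT.
apply: (balanced_cross_ordering (g := fun o => xAUC Y o A B - xAUC Y o B A)) => //.
- exact: ranking_size_gt0 ra pA.
- exact: ranking_size_gt0 rb pB.
- exact: xAUC_gap_start ra.2.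
- by rewrite -oppr_ge0 opprB; apply: xAUC_gap_start rb.2; rewrite disjoint_sym.
- by move=> L R x y xA yB; apply: xAUC_gap_swap.
Qed.

Lemma fair_PRF_ordering (T : finType) (A B : {set T}) (Y : T -> bool)
    (pa pb : seq T) :
  [disjoint A & B] ->
  (0 < npos Y A)%N -> (0 < nneg Y A)%N -> (0 < npos Y B)%N -> (0 < nneg Y B)%N ->
  ranking_of A pa -> ranking_of B pb ->
  exists o, cross_ordering A B pa pb o /\
     DPRF Y o A B <=
       Num.min
         (Num.max ((nneg Y B)%:R / ((npos Y A)%:R * (nneg Y A + nneg Y B)%:R))
                  (1 / (nneg Y A + nneg Y B)%:R))
         (Num.max ((nneg Y A)%:R / ((npos Y B)%:R * (nneg Y A + nneg Y B)%:R))
                  (1 / (nneg Y A + nneg Y B)%:R)).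
Proof.
move=> dAB pA nA pB nB ra rb; set s := Num.min _ _.
have n0_gt0 : (0 < nneg Y A + nneg Y B)%N by rewrite addn_gt0 nA.
have sAB : 1 / (npos Y A * (nneg Y A + nneg Y B))%:R <= s.
  by rewrite le_min !le_max inv_le_ratio ?inv_mul_ler ?orbT.
have sBA : 1 / (npos Y B * (nneg Y B + nneg Y A))%:R <= s.
  by rewrite [(nneg Y B + _)%N]addnC le_min !le_max inv_le_ratio ?inv_mul_ler ?orbT.
apply: (balanced_cross_ordering (g := fun o => PRF Y o A B - PRF Y o B A)) => //.
- exact: ranking_size_gt0 ra pA.
- exact: ranking_size_gt0 rb pB.
- exact: PRF_gap_start ra.2 pA pB.
- by rewrite -oppr_ge0 opprB; apply: PRF_gap_start rb.2 pB pA; rewrite disjoint_sym.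
- by move=> L R x y xA yB; apply: PRF_gap_swap.
Qed.

Theorem proposition1 (T : finType) (A B : {set T}) (Y : T -> bool)
    (pa pb : seq T) :
  [disjoint A & B] ->
  (1 <= npos Y A)%N -> (1 <= nneg Y A)%N ->
  (1 <= npos Y B)%N -> (1 <= nneg Y B)%N ->
  ranking_of A pa -> ranking_of B pb ->
  (exists o : seq T, cross_ordering A B pa pb o /\
     DxAUC Y o A B <=
       Num.min (Num.max (1 / (npos Y B)%:R) (1 / (nneg Y B)%:R))
               (Num.max (1 / (npos Y A)%:R) (1 / (nneg Y A)%:R)))
  /\
  (exists o' : seq T, cross_ordering A B pa pb o' /\
     DPRF Y o' A B <=
       Num.min
         (Num.max ((nneg Y B)%:R / ((npos Y A)%:R * (nneg Y A + nneg Y B)%:R))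
                  (1 / (nneg Y A + nneg Y B)%:R))
         (Num.max ((nneg Y A)%:R / ((npos Y B)%:R * (nneg Y A + nneg Y B)%:R))
                  (1 / (nneg Y A + nneg Y B)%:R))).
Proof.
move=> dAB pA nA pB nB ra rb; split.
- exact: fair_xAUC_ordering.
- exact: fair_PRF_ordering.
Qed.
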